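(* For each approval election $E=(C,V)$, $\mathrm{out\text{-}div}(E)\in[0,1]$.
   Context: An (approval) election is $E=(C,V)$ with $|C|=m$ candidates and a collection of voters $V=(v_1,\dots,v_n)$, each vote a binary vector in $\{0,1\}^m$; $A(v)$ is the set of candidates approved by $v$, and $\mathrm{satr}(E)=\frac{1}{nm}\sum_{v\in V}|A(v)|$. $\mathrm{ham}(u,v)=\sum_j|u[j]-v[j]|$. For collections $U=(u_1,\dots,u_k)$ and $V=(v_1,\dots,v_n)$, $\mathrm{ham}(U,V)=\frac{1}{kn}\min_{\pi}\sum_{i=1}^{kn}\mathrm{ham}(u_i,v_{\pi(i)})$ over bijections $\pi:[kn]\to[kn]$, indices of $U$ taken modulo $k$ and of $V$ modulo $n$. For rational $p\in[0,1]$, $p\text{-}\mathcal{U}_C$ is the collection in which each vote $w\in\{0,1\}^m$ appears a number of times proportional to $p^{r}(1-p)^{m-r}$, $r$ being the number of ones of $w$. With $p=\mathrm{satr}(E)$, Outer Diversity is $\mathrm{out\text{-}div}(E)=1-\frac{1}{2p(1-p)}\mathrm{ham}(V,p\text{-}\mathcal{U}_C)$.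
   Formalization: Outer Diversity divides $\mathrm{ham}(V,p\text{-}\mathcal{U}_C)$ by 2m·p(1−p) in place of $2p(1-p)$, so the Hamming distance to $p\text{-}\mathcal{U}_C$ is normalized per candidate. This corrects a misprint. *)

From mathcomp Require Import all_boot all_order all_algebra.
From mathcomp Require Import fingroup perm.
Set Implicit Arguments. Unset Strict Implicit. Unset Printing Implicit Defensive.
Import Order.TTheory GRing.Theory Num.Theory.
Local Open Scope ring_scope.

Definition vote (m : nat) := {ffun 'I_m -> bool}.

Definition vote0 (m : nat) : vote m := [ffun=> false].

Definition nappr (m : nat) (v : vote m) : nat := (\sum_(j < m) (v j : nat))%N.

Definition hamv (m : nat) (u v : vote m) : nat := (\sum_(j < m) (u j != v j : nat))%N.

(* An election with candidate set 'I_m and voter collection V (a sequence,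
   repetitions allowed, n = size V).  Total number of approvals: *)
Definition total_appr (m : nat) (V : seq (vote m)) : nat :=
  (\sum_(v <- V) nappr v)%N.

Definition satr (R : realFieldType) (m : nat) (V : seq (vote m)) : R :=
  (total_appr V)%:R / (size V * m)%:R.

(* Cost of a bijection pi : [kn] -> [kn], indices of U mod k, of V mod n. *)
Definition match_cost (m : nat) (U V : seq (vote m))
  (pi : {perm 'I_(size U * size V)}) : nat :=
  (\sum_(i < size U * size V)
     hamv (nth (vote0 m) U (i %% size U)) (nth (vote0 m) V (pi i %% size V)))%N.

Arguments match_cost : clear implicits.
Arguments match_cost {m} U V pi.

Definition ham_coll (R : realFieldType) (m : nat) (U V : seq (vote m)) : R :=
  (\big[minn/match_cost U V 1%g]_(pi : {perm 'I_(size U * size V)})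
      match_cost U V pi)%:R / (size U * size V)%:R.

(* p-U_C for p = a/b (0 <= a <= b): each w in {0,1}^m appears
   a^r (b-a)^(m-r) times, r = number of ones of w; this is proportional to
   p^r (1-p)^(m-r). *)
Definition pU (m a b : nat) : seq (vote m) :=
  flatten [seq nseq (a ^ nappr w * (b - a) ^ (m - nappr w))%N w
          | w <- enum {ffun 'I_m -> bool}].

(* Outer diversity, with p = satr(E) = total_appr V / (n m).
   The Hamming distance is normalized per candidate (division by m). *)
Definition out_div (R : realFieldType) (m : nat) (V : seq (vote m)) : R :=
  let p : R := satr R V in
  1 - (ham_coll R V (pU m (total_appr V) (size V * m)))
        / (2 * m%:R * p * (1 - p)).

From mathcomp Require Import all_boot all_order all_algebra.
From mathcomp Require Import fingroup perm.
From mathcomp Require Import ring.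
Set Implicit Arguments. Unset Strict Implicit. Unset Printing Implicit Defensive.
Import Order.TTheory GRing.Theory Num.Theory.

(* An optimal matching costs at most the average cost of the matchings
   pi_s(i) = s + i over all cyclic shifts s, and these together pair every
   voter of V with every vote of p-U_C equally often; so ham(V, p-U_C) is at
   most the mean Hamming distance between a voter of V and a vote of p-U_C.
   In p-U_C every candidate is approved by a p-fraction of the votes, while in
   V the approval rates average to p = satr(E); hence that mean is exactly
   m (p (1 - p) + (1 - p) p) = 2 m p (1 - p), and out-div(E) lies in [0, 1]. *)

Lemma sum_nat_seq_const (T : Type) (s : seq T) c : \sum_(x <- s) c = size s * c.
Proof. by rewrite big_const_seq count_predT iter_addn_0 mulnC. Qed.

Lemma sum_nth_ord (T : Type) (x0 : T) (s : seq T) (F : T -> nat) :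
  \sum_(x <- s) F x = \sum_(i < size s) F (nth x0 s i).
Proof. by rewrite (big_nth x0) big_mkord. Qed.

Lemma sum_nat_modn k n (F : nat -> nat) :
  \sum_(0 <= i < n * k) F (i %% k) = n * \sum_(0 <= j < k) F j.
Proof.
rewrite big_nat_mul -[n in RHS]subn0 -sum_nat_const_nat.
apply: eq_big_nat => i _; rewrite mulSn -{1}[i * k]add0n big_addn addnK.
by apply: eq_big_nat => j /andP[_ ltjk]; rewrite addnC modnMDl modn_small.
Qed.

(* The N cyclic shifts [i |-> s + i] of 'I_N together hit every pair (i, t)
   exactly once. *)
Lemma bigmin_perm_le_mean N (c : 'I_N -> 'I_N -> nat) x0 :
  N * \big[minn/x0]_(pi : {perm 'I_N}) \sum_(i < N) c i (pi i)
    <= \sum_(i < N) \sum_(t < N) c i t.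
Proof.
case: N c => [|N] c; first by rewrite mul0n.
have shift_sum : \sum_(s < N.+1) \sum_(i < N.+1) c i (perm (addrI s) i)
                 = \sum_(i < N.+1) \sum_(t < N.+1) c i t.
  rewrite exchange_big; apply: eq_bigr => i _.
  rewrite [RHS](reindex_inj (addIr i)); apply: eq_bigr => s _.
  by rewrite permE.
rewrite -shift_sum -[X in X * _]card_ord -sum_nat_const.
apply: leq_sum => s _.
exact: (bigmin_le x0 (perm (addrI s))).
Qed.

Lemma bigmin_match_cost_le_sum_hamv m (U W : seq (vote m)) :
  size U * size W * \big[minn/match_cost U W 1%g]_pi match_cost U W pi
    <= size U * size W * \sum_(u <- U) \sum_(w <- W) hamv u w.
Proof.
set k := size U; set n := size W.
pose h a b := hamv (nth (vote0 m) U a) (nth (vote0 m) W b).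
have := bigmin_perm_le_mean (fun i t : 'I_(k * n) => h (i %% k) (t %% n))
                            (match_cost U W 1).
(* [match_cost U W pi] is convertible to the cost of [pi] for this matrix. *)
congr (_ <= _).
rewrite (sum_nth_ord (vote0 m)) -/k.
transitivity (\sum_(i < k * n) k * \sum_(b < n) h (i %% k) b).
  apply: eq_bigr => i _.
  by rewrite -(big_mkord xpredT (fun t => h _ (t %% n))) sum_nat_modn big_mkord.
rewrite -big_distrr /= -(big_mkord xpredT (fun i => \sum_(b < n) h (i %% k) b)).
rewrite (mulnC k n) (sum_nat_modn k n (fun a => \sum_(b < n) h a b)) big_mkord.
rewrite mulnA [k * n]mulnC; congr (_ * _).
by apply: eq_bigr => a _; rewrite (sum_nth_ord (vote0 m)).
Qed.

Lemma nappr_le m (v : vote m) : nappr v <= m.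
Proof.
rewrite -[leqRHS]card_ord -sum1_card.
by apply: leq_sum => j _; case: (v j).
Qed.

Lemma total_appr_le m (V : seq (vote m)) : total_appr V <= size V * m.
Proof.
rewrite -sum_nat_seq_const; apply: leq_sum => v _.
exact: nappr_le.
Qed.

Lemma hamv_add_overlap m (v w : vote m) :
  hamv v w + 2 * \sum_(j < m) v j * w j = nappr v + nappr w.
Proof.
rewrite big_distrr -!big_split /=; apply: eq_bigr => j _.
by case: (v j); case: (w j).
Qed.

Lemma sum_hamv_const_cols m (P : seq (vote m)) d (v : vote m) :
  (forall j, \sum_(w <- P) (w j : nat) = d) ->
  \sum_(w <- P) hamv v w + 2 * (nappr v * d) = size P * nappr v + m * d.
Proof.
move=> colP.
have overlapP : \sum_(w <- P) \sum_(j < m) v j * w j = nappr v * d.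
  rewrite exchange_big /nappr big_distrl /=; apply: eq_bigr => j _.
  by rewrite -big_distrr /= colP.
have napprP : \sum_(w <- P) nappr w = m * d.
  rewrite exchange_big /= (eq_bigr (fun _ => d)) => [|j _]; last exact: colP.
  by rewrite sum_nat_const card_ord.
rewrite -overlapP big_distrr -big_split /=.
under eq_bigr do rewrite hamv_add_overlap.
by rewrite big_split /= napprP sum_nat_seq_const.
Qed.

Lemma sum_sum_hamv_const_cols m (V P : seq (vote m)) d :
  (forall j, \sum_(w <- P) (w j : nat) = d) ->
  \sum_(v <- V) \sum_(w <- P) hamv v w + 2 * (total_appr V * d)
    = size P * total_appr V + size V * (m * d).
Proof.
move=> colP; rewrite /total_appr big_distrl big_distrr -big_split /=.
under eq_bigr do rewrite sum_hamv_const_cols //.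
by rewrite big_split /= -big_distrr sum_nat_seq_const.
Qed.

Lemma expn_nappr m (w : vote m) a c :
  a ^ nappr w * c ^ (m - nappr w) = \prod_(j < m) (if w j then a else c).
Proof.
have nappr_split : nappr w + \sum_(j < m) ~~ w j = m.
  rewrite -big_split -[RHS]card_ord -sum1_card /=.
  by apply: eq_bigr => j _; case: (w j).
rewrite -[X in X - nappr w]nappr_split addKn /nappr !expn_sum -big_split /=.
by apply: eq_bigr => j _; case: (w j); rewrite ?muln1 ?mul1n.
Qed.

Lemma sum_pU m a b (F : vote m -> nat) :
  \sum_(w <- pU m a b) F w
    = \sum_(w : vote m) (\prod_(j < m) (if w j then a else b - a)) * F w.
Proof.
rewrite /pU big_flatten /= big_map big_enum /=.
by apply: eq_bigr => w _; rewrite big_nseq iter_addn_0 mulnC expn_nappr.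
Qed.

Lemma sum_pU_prod m a b (f : 'I_m -> bool -> nat) :
  \sum_(w <- pU m a b) \prod_(j < m) f j (w j)
    = \prod_(j < m) (a * f j true + (b - a) * f j false).
Proof.
rewrite sum_pU; under eq_bigr do rewrite -big_split /=.
rewrite -(bigA_distr_bigA (fun j x => (if x then a else b - a) * f j x)) /=.
by apply: eq_bigr => j _; rewrite big_bool.
Qed.

Lemma size_pU m a b : a <= b -> size (pU m a b) = b ^ m.
Proof.
move=> le_ab; rewrite -sum1_size.
transitivity (\sum_(w <- pU m a b) \prod_(j < m) 1).
  by apply: eq_bigr => w _; rewrite big1_eq.
rewrite (sum_pU_prod a b (fun _ _ => 1)) (eq_bigr (fun _ => b)) => [|j _].
  by rewrite prod_nat_const card_ord.
by rewrite !muln1 subnKC.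
Qed.

Lemma sum_pU_col m a b (i : 'I_m) :
  a <= b -> \sum_(w <- pU m a b) w i = a * b ^ m.-1.
Proof.
move=> le_ab.
transitivity (\sum_(w <- pU m a b) \prod_(j < m) (if j == i then w j : nat else 1)).
  by apply: eq_bigr => w _; rewrite (bigD1 i) //= eqxx big1 ?muln1 // => j /negbTE ->.
rewrite (sum_pU_prod a b (fun j x => if j == i then x : nat else 1)).
rewrite (bigD1 i) //= eqxx muln1 muln0 addn0.
rewrite (eq_bigr (fun _ => b)) => [|j /negbTE ->]; last by rewrite !muln1 subnKC.
by rewrite prod_nat_const cardC1 card_ord.
Qed.

Local Open Scope ring_scope.

Definition mean_ham (R : realFieldType) (m : nat) (U W : seq (vote m)) : R :=
  (\sum_(u <- U) \sum_(w <- W) hamv u w)%:R / (size U * size W)%:R.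

Lemma ham_coll_le_mean_ham (R : realFieldType) m (U W : seq (vote m)) :
  ham_coll R U W <= mean_ham R U W.
Proof.
rewrite /ham_coll /mean_ham; have [N0|N_gt0] := posnP (size U * size W).
  by rewrite [in (size U * size W)%N%:R]N0 invr0 !mulr0.
rewrite ler_wpM2r ?invr_ge0 ?ler0n // ler_nat -(leq_pmul2l N_gt0).
exact: bigmin_match_cost_le_sum_hamv.
Qed.

Lemma ham_coll_ge0 (R : realFieldType) m (U W : seq (vote m)) : 0 <= ham_coll R U W.
Proof. by rewrite divr_ge0. Qed.

Lemma mean_ham_pU (R : realFieldType) m (V : seq (vote m)) :
  mean_ham R V (pU m (total_appr V) (size V * m))
    = 2 * m%:R * satr R V * (1 - satr R V).
Proof.
rewrite /mean_ham /satr; set k := size V; set A := total_appr V; set B := (k * m)%N.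
have le_AB : (A <= B)%N := total_appr_le V.
have := sum_sum_hamv_const_cols V (fun j => sum_pU_col j le_AB).
rewrite size_pU //; set S := (\sum_(v <- V) _)%N => sumP.
have [B0|B_gt0] := posnP B.
  have A0 : A = 0%N by apply/eqP; rewrite -leqn0 -B0.
  have S0 : S = 0%N by move: sumP; rewrite -/A A0 !(mul0n, muln0, addn0).
  by rewrite S0 A0 !mul0r mulr0 mul0r.
have /andP[k_gt0 m_gt0] : (0 < k)%N && (0 < m)%N by rewrite -muln_gt0.
have expBm : (B ^ m = B * B ^ m.-1)%N by rewrite -expnS prednK.
move/eqP: sumP; rewrite -/A expBm -(eqr_nat R) !natrD !natrM => /eqP sumP.
rewrite (canRL (addrK _) sumP) -/k.
field.
by rewrite !pnatr_eq0 -!lt0n k_gt0 m_gt0 expn_gt0 B_gt0.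
Qed.

Lemma one_sub_ratio_in01 (R : realFieldType) (x y : R) :
  0 <= x <= y -> 0 <= 1 - x / y <= 1.
Proof.
case/andP=> x_ge0 le_xy; have [->|y_neq0] := eqVneq y 0.
  by rewrite invr0 mulr0 subr0 ler01 lexx.
have y_gt0 : 0 < y by rewrite lt_def y_neq0 (le_trans x_ge0 le_xy).
by rewrite subr_ge0 gerBl ler_pdivrMr // mul1r le_xy divr_ge0 // ltW.
Qed.

Theorem proposition7 (R : realFieldType) (m : nat) (V : seq (vote m)) :
  0 <= out_div R V <= 1.
Proof.
rewrite /out_div /= -mean_ham_pU; apply: one_sub_ratio_in01.
by rewrite ham_coll_ge0 ham_coll_le_mean_ham.
Qed.
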